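(* Let $\beta>1$ and $U(x)=(|x|^2)^\beta$ on $\mathbb{R}^n$. Then for all $x,y\in\mathbb{R}^n$, $$\langle\nabla U(x)-\nabla U(y),x-y\rangle\ge 2\beta\,2^{3-3\beta}\,|x-y|^{2\beta}.$$ If $n=1$, the better bound $\langle\nabla U(x)-\nabla U(y),x-y\rangle\ge 2\beta\,2^{2-2\beta}|x-y|^{2\beta}$ holds. *)

From HB Require Import structures.
From mathcomp Require Import all_boot all_order all_algebra.
From mathcomp Require Import all_classical all_reals all_analysis.
Set Implicit Arguments. Unset Strict Implicit. Unset Printing Implicit Defensive.
Import Order.TTheory GRing.Theory Num.Theory.
Import numFieldNormedType.Exports.
Local Open Scope ring_scope.

Definition dotv (R : realType) (n : nat) (x y : 'rV[R]_n) : R :=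
  \sum_(i < n) x 0 i * y 0 i.

Definition sqnorm (R : realType) (n : nat) (x : 'rV[R]_n) : R := dotv x x.

Definition Upot (R : realType) (n : nat) (beta : R) (x : 'rV[R]_n) : R :=
  powR (sqnorm x) beta.

Definition basisv (R : realType) (n : nat) (i : 'I_n) : 'rV[R]_n :=
  delta_mx 0 i.

Definition grad (R : realType) (n : nat) (f : 'rV[R]_n -> R) (x : 'rV[R]_n)
  : 'rV[R]_n :=
  \row_(i < n) ('D_(basisv R i) f x).

From HB Require Import structures.
From mathcomp Require Import all_boot all_order all_algebra.
From mathcomp Require Import all_classical all_reals all_analysis.
From mathcomp Require Import ring lra.
Import Order.TTheory GRing.Theory Num.Theory.
Import numFieldNormedType.Exports.
Local Open Scope ring_scope.

(* The gradient is grad U(x) = 2 beta |x|^(2 beta - 2) x, so the left-hand side only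
   depends on a = |x|, g = |y| and s = <x,y>, where |s| <= a g by Cauchy-Schwarz.
   Writing s = (2 l - 1) a g with l in [0, 1] and r = 2 beta - 1, one has
     |x - y|^2 = l (a - g)^2 + (1 - l) (a + g)^2,
     <grad U(x) - grad U(y), x - y> / (2 beta)
       = l (a^r - g^r)(a - g) + (1 - l)(a^r + g^r)(a + g).
   Superadditivity of t^r bounds the first product below by |a - g|^(r+1), midpoint
   convexity bounds the second below by 2^(1-r) (a + g)^(r+1), and convexity of t^beta
   then yields the bound with constant 2^(2 - 2 beta) in every dimension; the general
   constant 2^(3 - 3 beta) is smaller. *)

Section RealPowers.
Context {R : realType}.
Implicit Types t u v a g s m w p : R.

Section PowerInequalities.
Context {r : R}.
Hypothesis r_ge1 : 1 <= r.

Let r_neq0 : r != 0. Proof. by rewrite gt_eqF // (lt_le_trans _ r_ge1). Qed.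

Lemma convex_powR_le {t u v} : 0 <= t -> t <= 1 -> 0 <= u -> 0 <= v ->
  powR (t * u + (1 - t) * v) r <= t * powR u r + (1 - t) * powR v r.
Proof.
move=> t0 t1 u0 v0.
have := @convex_powR R r r_ge1 (@Itv01 _ _ t0 t1) u v.
by rewrite !inE /= !in_itv /= !andbT => /(_ u0 v0); rewrite !convRE.
Qed.

Lemma powRD_ge {a g} : 0 <= a -> 0 <= g -> powR a r + powR g r <= powR (a + g) r.
Proof.
move=> a_ge0 g_ge0.
have [->|a_neq0] := eqVneq a 0; first by rewrite powR0 // !add0r.
have [->|g_neq0] := eqVneq g 0; first by rewrite powR0 // !addr0.
have a0 : 0 < a by rewrite lt_def a_neq0.
have g0 : 0 < g by rewrite lt_def g_neq0.
have m0 : 0 < a + g by rewrite addr_gt0.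
have powR_share w : 0 < w -> w <= a + g -> powR w r <= w / (a + g) * powR (a + g) r.
  move=> w0 wm; rewrite -{1}(divfK (lt0r_neq0 m0) w) ge1r_powRZ ?(ltW m0) //.
  by rewrite divr_gt0 //= ler_pdivrMr // mul1r.
have a_le : a <= a + g by rewrite lerDl ltW.
have g_le : g <= a + g by rewrite lerDr ltW.
apply: le_trans (lerD (powR_share a a0 a_le) (powR_share g g0 g_le)) _.
by rewrite -!mulrDl divff ?mul1r // lt0r_neq0.
Qed.

Lemma powRD_le {a g} : 0 <= a -> 0 <= g ->
  powR 2 (1 - r) * powR (a + g) r <= powR a r + powR g r.
Proof.
move=> a0 g0.
have half0 : 0 <= (2:R)^-1 by rewrite invr_ge0.
have := convex_powR_le half0 _ a0 g0; rewrite invf_le1 ?ler1n // => /(_ isT).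
have -> : 1 - (2:R)^-1 = 2^-1 by field.
move=> mid.
have -> : powR 2 (1 - r) * powR (a + g) r = 2 * powR (2^-1 * a + 2^-1 * g) r.
  rewrite -mulrDr powRM ?addr_ge0 // -(powR_inv1 (ler0n _ 2)) -powRrM mulN1r.
  by rewrite powRD ?pnatr_eq0 ?implybT // powRr1 // !powRN mulrA.
apply: le_trans (ler_wpM2l (ler0n _ 2) mid) _.
by rewrite mulrDr !mulrA divff ?mul1r.
Qed.

Lemma normB_powR_le {a g} : 0 <= a -> 0 <= g ->
  `|a - g| * powR `|a - g| r <= (powR a r - powR g r) * (a - g).
Proof.
wlog ga : a g / g <= a => [hwlog a0 g0|a0 g0].
  have [|ag] := leP g a; first by move=> ?; apply: hwlog.
  by rewrite distrC -[X in _ <= X]mulrNN !opprB hwlog // ltW.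
have d0 : 0 <= a - g by rewrite subr_ge0.
rewrite ger0_norm // mulrC ler_wpM2r //.
by have := powRD_ge g0 d0; rewrite subrKC; lra.
Qed.

Lemma normD_powR_le {a g} : 0 <= a -> 0 <= g ->
  powR 2 (1 - r) * ((a + g) * powR (a + g) r) <= (powR a r + powR g r) * (a + g).
Proof.
move=> a0 g0; rewrite mulrCA mulrC ler_wpM2r ?addr_ge0 //; exact: powRD_le.
Qed.

End PowerInequalities.

Lemma powR_sqr w p : powR (w ^+ 2) p = powR `|w| (2 * p).
Proof.
have -> : w ^+ 2 = powR `|w| 2%:R by rewrite powR_mulrn // -normrX ger0_norm ?sqr_ge0.
by rewrite -powRrM.
Qed.

Lemma norm_le_convex_param s m :
  `|s| <= m -> exists2 l, 0 <= l <= 1 & s = (2 * l - 1) * m.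
Proof.
move=> sm; have [m0|m_neq0] := eqVneq m 0.
  exists 2^-1; first by rewrite invr_ge0 invf_le1 ?ler0n ?ler1n.
  by move: sm; rewrite m0 mulr0 normr_le0 => /eqP.
have m0 : 0 < m by rewrite lt_def m_neq0 (le_trans _ sm).
exists ((s / m + 1) / 2); last by field.
have /andP[lo hi] : -1 <= s / m <= 1.
  by rewrite ler_pdivrMr // ler_pdivlMr // mul1r mulN1r -ler_norml.
by apply/andP; split; rewrite ?ler_pdivrMr ?divr_ge0 //; lra.
Qed.

Lemma scalar_monotonicity be a g s :
  1 < be -> 0 <= a -> 0 <= g -> `|s| <= a * g ->
  powR 2 (2 - 2 * be) * powR (a ^+ 2 + g ^+ 2 - 2 * s) be <=
  powR (a ^+ 2) (be - 1) * (a ^+ 2 - s) + powR (g ^+ 2) (be - 1) * (g ^+ 2 - s).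
Proof.
move=> be1 a0 g0 /norm_le_convex_param[l /andP[l0 l1] ->].
set r := 2 * be - 1.
have r1 : 1 <= r by rewrite /r; lra.
have r0 : 0 < r by lra.
have powR_r w : 0 <= w -> w * powR (w ^+ 2) (be - 1) = powR w r.
  move=> w0; rewrite powR_sqr ger0_norm // (_ : 2 * (be - 1) = r - 1).
    exact: mulr_powRB1.
  by rewrite /r; ring.
have powR_sqr_be w : powR (w ^+ 2) be = `|w| * powR `|w| r.
  by rewrite powR_sqr mulr_powRB1 // mulr_gt0 // (lt_trans _ be1).
have -> : a ^+ 2 + g ^+ 2 - 2 * ((2 * l - 1) * (a * g)) =
          l * (a - g) ^+ 2 + (1 - l) * (a + g) ^+ 2 by ring.
have -> : powR (a ^+ 2) (be - 1) * (a ^+ 2 - (2 * l - 1) * (a * g)) +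
          powR (g ^+ 2) (be - 1) * (g ^+ 2 - (2 * l - 1) * (a * g)) =
          l * ((powR a r - powR g r) * (a - g)) +
          (1 - l) * ((powR a r + powR g r) * (a + g)).
  by rewrite -(powR_r a) // -(powR_r g) //; ring.
have c_eq : powR 2 (2 - 2 * be) = powR 2 (1 - r) by rewrite /r; congr powR; ring.
have c_le1 : powR 2 (1 - r) <= 1.
  have r_sub : 1 - r <= 0 by lra.
  by have := ler_powR (ler1n R 2) r_sub; rewrite powRr0.
have := convex_powR_le (ltW be1) l0 l1 (sqr_ge0 (a - g)) (sqr_ge0 (a + g)).
rewrite !powR_sqr_be => /(ler_wpM2l (powR_ge0 2 (2 - 2 * be))) /le_trans; apply.
rewrite c_eq mulrDr [_ * (l * _)]mulrCA [_ * ((1 - l) * _)]mulrCA.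
rewrite (ger0_norm (addr_ge0 a0 g0)).
apply: lerD; apply: ler_wpM2l; rewrite ?subr_ge0 //.
- apply: le_trans (normB_powR_le r1 a0 g0).
  by apply: ler_piMl; rewrite // mulr_ge0 ?powR_ge0.
- exact: normD_powR_le.
Qed.

End RealPowers.

Section InnerProduct.
Context {R : realType} {n : nat}.
Implicit Types x y z : 'rV[R]_n.

Lemma dotvC x y : dotv x y = dotv y x.
Proof. by apply: eq_bigr => i _; rewrite mulrC. Qed.

Lemma dotvDl x y z : dotv (x + y) z = dotv x z + dotv y z.
Proof. by rewrite /dotv -big_split; apply: eq_bigr => i _; rewrite !mxE mulrDl. Qed.

Lemma dotvZl k x z : dotv (k *: x) z = k * dotv x z.
Proof. by rewrite /dotv mulr_sumr; apply: eq_bigr => i _; rewrite !mxE mulrA. Qed.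

Lemma dotvBl x y z : dotv (x - y) z = dotv x z - dotv y z.
Proof. by rewrite dotvDl -scaleN1r dotvZl mulN1r. Qed.

Lemma dotvDr x y z : dotv z (x + y) = dotv z x + dotv z y.
Proof. by rewrite dotvC dotvDl !(dotvC z). Qed.

Lemma dotvZr k x z : dotv z (k *: x) = k * dotv z x.
Proof. by rewrite dotvC dotvZl dotvC. Qed.

Lemma dotvBr x y z : dotv z (x - y) = dotv z x - dotv z y.
Proof. by rewrite dotvC dotvBl !(dotvC z). Qed.

Lemma dotv_basisl i x : dotv (basisv R i) x = x 0 i.
Proof.
rewrite /dotv (bigD1 i) //= !mxE !eqxx mul1r big1 ?addr0 // => j /negbTE ji.
by rewrite mxE ji andbF mul0r.
Qed.

Lemma sqnorm_ge0 x : 0 <= sqnorm x.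
Proof. by apply: sumr_ge0 => i _; rewrite -expr2 sqr_ge0. Qed.

Lemma sqnorm_eq0 x : sqnorm x = 0 -> x = 0.
Proof.
move=> x0; apply/rowP => i; rewrite !mxE.
have sqr_ge0' j : true -> 0 <= x 0 j * x 0 j by rewrite -expr2 sqr_ge0.
by apply/eqP; rewrite -sqrf_eq0 expr2; apply/eqP/(psumr_eq0P sqr_ge0' x0).
Qed.

Lemma sqnormB x y : sqnorm (x - y) = sqnorm x + sqnorm y - 2 * dotv x y.
Proof. by rewrite /sqnorm dotvBl !dotvBr (dotvC y x); ring. Qed.

Lemma sqnorm_basis_line i x h :
  sqnorm (h *: basisv R i + x) = sqnorm x + h * (2 * x 0 i + h).
Proof.
rewrite /sqnorm dotvDl !dotvDr !dotvZl !dotvZr (dotvC x) !dotv_basisl.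
by rewrite /basisv mxE !eqxx /=; ring.
Qed.

Lemma dotv_sqr_le x y : dotv x y ^+ 2 <= sqnorm x * sqnorm y.
Proof.
have [y0|y_neq0] := eqVneq y 0.
  have dotv0 z : dotv z 0 = 0 by rewrite /dotv big1 // => i _; rewrite mxE mulr0.
  by rewrite y0 /sqnorm !dotv0 expr0n mulr0.
have y_pos : 0 < sqnorm y.
  by rewrite lt_def sqnorm_ge0 andbT; apply: contra_neq y_neq0; apply: sqnorm_eq0.
have := sqnorm_ge0 (sqnorm y *: x - dotv x y *: y).
rewrite sqnormB /sqnorm !dotvZl !dotvZr.
set a := dotv x x; set b := dotv y y; set c := dotv x y.
have -> : b * (b * a) + c * (c * b) - 2 * (b * (c * c)) = b * (a * b - c ^+ 2) by ring.
by rewrite pmulr_rge0 // subr_ge0.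
Qed.

Lemma norm_dotv_le x y : `|dotv x y| <= Num.sqrt (sqnorm x) * Num.sqrt (sqnorm y).
Proof.
rewrite -sqrtrM ?sqnorm_ge0 // -sqrtr_sqr ler_sqrt ?mulr_ge0 ?sqnorm_ge0 //.
exact: dotv_sqr_le.
Qed.

End InnerProduct.

Section Derivatives.
Context {R : realType}.

Lemma derive1_eq0_of_sqr_bound (f : R -> R) :
  f 0 = 0 -> (forall h, `|h| <= 1 -> `|f h| <= h ^+ 2) -> 'D_1 f 0 = 0.
Proof.
move=> f0 f_le; rewrite /derive; apply: cvg_lim => //.
apply/cvgr0Pnorm_le => e e0.
near=> h.
have h_neq0 : h != 0 by near: h; exact: nbhs_dnbhs_neq.
have : `|h| <= Num.min e 1 by near: h; apply: dnbhs0_le; rewrite lt_min e0 ltr01.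
rewrite le_min => /andP[he h1].
rewrite /= addr0 [_%:A]mulr1 f0 subr0 normrZ normfV.
apply: le_trans he; rewrite ler_pdivrMl ?normr_gt0 //.
by apply: le_trans (f_le h h1) _; rewrite -normrM expr2 ger0_norm // -expr2 sqr_ge0.
Unshelve. all: end_near.
Qed.

Lemma derive1_powR_quadratic (be S c : R) : 1 < be -> 0 <= S -> (S = 0 -> c = 0) ->
  'D_1 (fun h : R => powR (S + h * (c + h)) be) 0 = be * powR S (be - 1) * c.
Proof.
move=> be1 S0 Sc; have be_neq0 : be != 0 by rewrite gt_eqF // (lt_trans _ be1).
have [S_eq0|S_neq0] := eqVneq S 0.
  rewrite (Sc S_eq0) S_eq0 mulr0; apply: derive1_eq0_of_sqr_bound.
    by rewrite mul0r addr0 powR0.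
  move=> h h1; rewrite !add0r -expr2 ger0_norm ?powR_ge0 //.
  have [->|h_neq0] := eqVneq h 0; first by rewrite expr0n powR0.
  apply: ge1r_powR (ltW be1); rewrite lt_def sqrf_eq0 h_neq0 sqr_ge0 /=.
  by rewrite -(ger0_norm (sqr_ge0 h)) normrX exprn_ile1.
have quad : is_derive (0:R) 1 (cst S + @id R * (cst c + @id R)) c.
  apply: is_derive_eq; rewrite /= scale0r !add0r.
  by change ((c + 0)%:A = c); rewrite addr0 [_%:A]mulr1.
have pow : is_derive (S + 0 * (c + 0)) 1 (@powR R ^~ be) (be * powR S (be - 1)).
  by rewrite mul0r addr0; apply: is_derive1_powR; rewrite lt_def S_neq0.
have := is_derive1_comp (g := cst S + @id R * (cst c + @id R)) pow quad.
by move=> /(@derive_val _ _ _ _ _ _ _) <-.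
Qed.

End Derivatives.

Section Potential.
Context {R : realType} {n : nat} {be : R}.
Hypothesis be1 : 1 < be.
Implicit Types x y : 'rV[R]_n.

Lemma grad_Upot x : grad (Upot be) x = (2 * be * powR (sqnorm x) (be - 1)) *: x.
Proof.
apply/rowP => i; rewrite !mxE.
have -> : 'D_(basisv R i) (Upot be) x =
    'D_1 (fun h : R => powR (sqnorm x + h * (2 * x 0 i + h)) be) 0.
  rewrite /derive; do 2 f_equal; apply: funext => h /=.
  by rewrite /Upot sqnorm_basis_line !addr0 mul0r addr0 [_%:A]mulr1.
rewrite derive1_powR_quadratic ?sqnorm_ge0 //; first by ring.
by move=> /sqnorm_eq0 ->; rewrite mxE mulr0.
Qed.

Lemma Upot_grad_strongly_monotone x y :
  2 * be * powR 2 (2 - 2 * be) * powR (sqnorm (x - y)) be <=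
  dotv (grad (Upot be) x - grad (Upot be) y) (x - y).
Proof.
rewrite !grad_Upot dotvBl !dotvZl !dotvBr sqnormB (dotvC y x).
have := scalar_monotonicity _ _ _ _ be1 (sqrtr_ge0 _) (sqrtr_ge0 _) (norm_dotv_le x y).
rewrite !sqr_sqrtr ?sqnorm_ge0 // => scalar_ineq.
have be0 : 0 <= 2 * be by rewrite mulr_ge0 // ltW // (lt_trans _ be1).
rewrite -mulrA; apply: le_trans (ler_wpM2l be0 scalar_ineq) _.
by rewrite /sqnorm le_eqVlt; apply/orP; left; apply/eqP; ring.
Qed.

End Potential.

Theorem proposition5p4 (R : realType) (n : nat) (beta : R) (hbeta : 1 < beta) :
  (forall x y : 'rV[R]_n,
     dotv (grad (Upot beta) x - grad (Upot beta) y) (x - y)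
       >= 2 * beta * powR 2 (3 - 3 * beta) * powR (sqnorm (x - y)) beta)
  /\
  (n = 1%N ->
   forall x y : 'rV[R]_n,
     dotv (grad (Upot beta) x - grad (Upot beta) y) (x - y)
       >= 2 * beta * powR 2 (2 - 2 * beta) * powR (sqnorm (x - y)) beta).
Proof.
split=> [x y|_ x y]; last exact: Upot_grad_strongly_monotone.
apply: le_trans (Upot_grad_strongly_monotone hbeta x y).
have beta0 : 0 <= 2 * beta by rewrite mulr_ge0 // ltW // (lt_trans _ hbeta).
rewrite ler_wpM2r ?powR_ge0 // ler_wpM2l // ler_powR ?ler1n //; lra.
Qed.
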